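(* Let $n,k$ be integers with $2<2k\le n$ such that the integer program $( * )$ has a solution but no trivial solution, and let $2r+1$ be the optimal value of $( * )$ (so that $g_{odd}(\mathrm{Pet}(n,k))=2r+3$). Then there is no homomorphism $\mathrm{Pet}(n,k)\to C_{2r+3}$.
   Context: For integers $n,k$ with $2<2k\le n$, the generalized Petersen graph $\mathrm{Pet}(n,k)$ has vertex set $\{u_0,\dots,u_{n-1}\}\cup\{v_0,\dots,v_{n-1}\}$ and edge set $\{u_iu_{i+1}\}\cup\{u_iv_i\}\cup\{v_iv_{i+k}\}$, indices modulo $n$. The integer program $( * )$ is: minimize $\mathsf{u}+\mathsf{v}_++\mathsf{v}_-$ over integers $\mathsf{u},\mathsf{v}_+,\mathsf{v}_-,r\ge 0$ and $t\in\mathbb{Z}$ subject to $\mathsf{u}+k(\mathsf{v}_+-\mathsf{v}_-)=tn$ and $\mathsf{u}+\mathsf{v}_++\mathsf{v}_-=2r+1$. A solution is a minimizer; it is trivial if $\mathsf{u}=0$ or $\mathsf{v}_++\mathsf{v}_-=0$. $C_m$ is the cycle of length $m$; $g_{odd}$ is the odd girth. A homomorphism $G\to H$ is a map $V(G)\to V(H)$ sending edges to edges. *)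

From HB Require Import structures.
From mathcomp Require Import all_boot all_order all_algebra.
Set Implicit Arguments. Unset Strict Implicit. Unset Printing Implicit Defensive.
Import Order.TTheory GRing.Theory Num.Theory.

(* Vertices of Pet(n,k): inl i = u_i, inr i = v_i, with i : 'I_n. *)
Definition pet_vertex (n : nat) : finType := ('I_n + 'I_n)%type.

Definition pet_adj (n k : nat) (x y : pet_vertex n) : bool :=
  match x, y with
  | inl i, inl j => (val j == (val i).+1 %% n) || (val i == (val j).+1 %% n)
  | inl i, inr j => val i == val j
  | inr i, inl j => val i == val j
  | inr i, inr j => (val j == (val i + k) %% n) || (val i == (val j + k) %% n)
  end.

Arguments pet_adj : clear implicits.

Definition cycle_adj (m : nat) (i j : 'I_m) : bool :=
  (val j == (val i).+1 %% m) || (val i == (val j).+1 %% m).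

Arguments cycle_adj : clear implicits.

Definition pet_hom_to_cycle (n k m : nat) (f : pet_vertex n -> 'I_m) : Prop :=
  forall x y : pet_vertex n, pet_adj n k x y -> cycle_adj m (f x) (f y).

Definition ip_feasible (n k u vp vm : nat) : Prop :=
  (exists t : int, (u%:Z + k%:Z * (vp%:Z - vm%:Z) = t * n%:Z)%R) /\
  (exists r : nat, u + vp + vm = 2 * r + 1).

Definition ip_solution (n k u vp vm : nat) : Prop :=
  ip_feasible n k u vp vm /\
  forall u' vp' vm', ip_feasible n k u' vp' vm' -> u + vp + vm <= u' + vp' + vm'.

Arguments pet_hom_to_cycle : clear implicits.

Definition ip_trivial (u vp vm : nat) : Prop := u = 0 \/ vp + vm = 0.

From HB Require Import structures.
From mathcomp Require Import all_boot all_order all_algebra.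
From mathcomp Require Import zify ring.
Import GRing.Theory.
Set Implicit Arguments. Unset Strict Implicit.

(* A homomorphism f : Pet(n,k) -> C_m with m = 2r+3 odd sends every closed
   walk of length m to a closed walk of length m in C_m, which must wind once
   around the cycle: all its steps have the same orientation.  A nontrivial
   solution (u, v+, v-) of ( * ), so u > 0, yields, for every i, a closed walk
   of length m starting with u rim steps at u_i, crossing the spoke at i+u,
   going around the inner cycles and returning through the spoke at i.
   Comparing orientations, the spoke at i+u is oriented opposite to the spoke
   at i, and for u >= 2 consecutive rim edges are oriented alike, which forces
   all spokes to be oriented alike, a contradiction.  So u = 1 and the spoke
   orientations alternate around the rim, whence n is even; but then
   1 + k (v+ - v-) = t n is impossible since v+ + v- is even. *)

Definition cycle_fwd m (a b : 'I_m) : bool := val b == (val a).+1 %% m.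

Lemma succ_modn m a : a < m -> a.+1 %% m = if a.+1 == m then 0 else a.+1.
Proof. by move=> lt_am; case: eqP => [->|ne]; [rewrite modnn | rewrite modn_small; lia]. Qed.

Lemma modnSml m d : (m %% d).+1 %% d = m.+1 %% d.
Proof. by rewrite -addn1 modnDml addn1. Qed.

Lemma cycle_fwdC m (a b : 'I_m) :
  2 < m -> cycle_adj m a b -> cycle_fwd b a = ~~ cycle_fwd a b.
Proof.
move: a b => [a lt_am] [b lt_bm] m_gt2; rewrite /cycle_adj /cycle_fwd /= !succ_modn //.
by case: (a.+1 =P m) => ?; case: (b.+1 =P m) => ?;
  case: (b =P _) => ?; case: (a =P _) => ? //=; lia.
Qed.

Lemma cycle_adj_step m (a b : 'I_m) : cycle_adj m a b ->
  exists c : int, (b%:Z - a%:Z = 1 - 2 * (~~ cycle_fwd a b : nat)%:Z + c * m%:Z)%R.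
Proof.
move: a b => [a lt_am] [b lt_bm]; rewrite /cycle_adj /cycle_fwd /= !succ_modn //.
case: (a.+1 =P m) => ?; case: (b.+1 =P m) => ?;
  case: (b =P _) => ?; case: (a =P _) => ? //= _.
all: first [exists 0%R; lia | exists 1%R; lia | exists (-1)%R; lia].
Qed.

Definition cycle_backsteps m (W : nat -> 'I_m) J :=
  count (fun j => ~~ cycle_fwd (W j) (W j.+1)) (iota 0 J).

Lemma cycle_backstepsS m (W : nat -> 'I_m) J :
  cycle_backsteps W J.+1 = cycle_backsteps W J + ~~ cycle_fwd (W J) (W J.+1).
Proof. by rewrite /cycle_backsteps -addn1 iotaD count_cat /= add0n addn0 addn1. Qed.

Lemma cycle_walk_displacement m (W : nat -> 'I_m) J :
  (forall j, j < J -> cycle_adj m (W j) (W j.+1)) ->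
  exists c : int,
    ((W J)%:Z - (W 0%N)%:Z = J%:Z - 2 * (cycle_backsteps W J)%:Z + c * m%:Z)%R.
Proof.
elim: J => [|J IH] adjW; first by exists 0%R; rewrite /cycle_backsteps /=; lia.
have [c disp] := IH (fun j lt_jJ => adjW j (ltnW lt_jJ)).
have [c' step] := cycle_adj_step (adjW J (ltnSn J)).
exists (c + c')%R; rewrite cycle_backstepsS.
by move: step disp; case: (~~ cycle_fwd _ _) => /=; lia.
Qed.

Lemma odd_cycle_closed_walk_fwd m (W : nat -> 'I_m) :
  odd m -> (forall j, j < m -> cycle_adj m (W j) (W j.+1)) -> W m = W 0 ->
  forall j, j < m -> cycle_fwd (W j) (W j.+1) = cycle_fwd (W 0) (W 1).
Proof.
move=> odd_m adjW closedW j lt_jm.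
have N_le_m : cycle_backsteps W m <= m by rewrite -[X in _ <= X](size_iota 0) count_size.
(* The total displacement m - 2N is a multiple of m, |m - 2N| <= m and m is odd. *)
have N_cases : cycle_backsteps W m = 0 \/ cycle_backsteps W m = m.
  have [c] := cycle_walk_displacement adjW; rewrite closedW.
  have /= := odd_double_half m; rewrite odd_m.
  move: (cycle_backsteps W m) N_le_m => N N_le_m m_eq disp.
  have : (c <= -2 \/ c = -1 \/ c = 0 \/ 1 <= c)%R by lia.
  by case=> [|[|[|]]] ?; nia.
have step_fwd i : i < m -> cycle_fwd (W i) (W i.+1) = (cycle_backsteps W m == 0).
  move=> lt_im; have i_in : i \in iota 0 m by rewrite mem_iota.
  case: N_cases => N_eq; rewrite N_eq /=.
  - by move/eqP: N_eq; rewrite eqn0Ngt -has_count => /hasPn/(_ i i_in)/negbNE.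
  - move/eqP: N_eq; rewrite -[X in _ == X](size_iota 0 m) -all_count.
    by rewrite (gtn_eqF (odd_gt0 odd_m)) => /allP/(_ i i_in)/negbTE.
by rewrite !step_fwd // odd_gt0.
Qed.

Lemma ip_closing n k u vp vm (t : int) : k <= n ->
  (u%:Z + k%:Z * (vp%:Z - vm%:Z) = t * n%:Z)%R -> (u + vp * k + vm * (n - k)) %% n = 0.
Proof.
move=> k_le_n eq_t.
have : (Posz n %| Posz (u + vp * k + vm * (n - k)))%Z.
  apply/dvdzP; exists (t + vm%:Z)%R.
  by rewrite !PoszD !PoszM -subzn // mulrDl -eq_t; ring.
by rewrite dvdzE /= => /eqP.
Qed.

Lemma ip_equation_parity n k u vp vm (t : int) :
  odd u -> odd (u + vp + vm) -> ~~ odd n ->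
  (u%:Z + k%:Z * (vp%:Z - vm%:Z) != t * n%:Z)%R.
Proof.
move=> odd_u odd_sum even_n; apply/eqP => eq_t.
have even_vpm : ~~ odd (vp + vm) by move: odd_sum; rewrite -addnA oddD odd_u.
move: (odd_double_half u) (odd_double_half (vp + vm)) (odd_double_half n).
rewrite odd_u (negbTE even_vpm) (negbTE even_n) /=.
move: u./2 (vp + vm)./2 n./2 => a b c u_eq sum_eq n_eq.
have : (k%:Z * (vp%:Z - vm%:Z) = 2 * (k%:Z * (b%:Z - vm%:Z)))%R by nia.
have : (t * n%:Z = 2 * (t * c%:Z))%R by nia.
lia.
Qed.

Lemma inZp_mod p' x y : x %% p'.+1 = y %% p'.+1 -> inZp x = inZp y :> 'I_p'.+1.
Proof. by move=> eq_mod; apply: val_inj. Qed.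

Section PetersenWalk.
Variables (n' k u vp vm : nat).
Local Notation n := n'.+1.
Hypotheses (k_le_n : k <= n) (walk_closes : (u + vp * k + vm * (n - k)) %% n = 0).

(* The closed walk u_i, u_(i+1), ..., u_(i+u), v_(i+u), then vp inner steps
   of +k and vm inner steps of -k (written +(n-k) to avoid truncated
   subtraction), which ends at v_i by [walk_closes], and back to u_i. *)
Definition pet_walk i j : pet_vertex n :=
  if j <= u then inl (inZp (i + j))
  else if j <= u + vp then inr (inZp (i + u + (j - u - 1) * k))
  else if j <= u + vp + vm + 1 then inr (inZp (i + u + vp * k + (j - u - vp - 1) * (n - k)))
  else inl (inZp i).

Lemma pet_walk_rim i j : j <= u -> pet_walk i j = inl (inZp (i + j)).
Proof. by rewrite /pet_walk => ->. Qed.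

Lemma pet_walk_plus i l : l <= vp -> pet_walk i (u + 1 + l) = inr (inZp (i + u + l * k)).
Proof.
move=> le_l; rewrite /pet_walk ifF; last lia.
case: (ltnP l vp) => [lt_l | ge_l].
  by rewrite ifT; [congr (inr (inZp (_ + _ * _))); lia | lia].
have -> : l = vp by lia.
rewrite ifF; last lia.
rewrite ifT; last lia.
have -> : u + 1 + vp - u - vp - 1 = 0 by lia.
by rewrite mul0n addn0.
Qed.

Lemma pet_walk_minus i l : l <= vm ->
  pet_walk i (u + 1 + vp + l) = inr (inZp (i + u + vp * k + l * (n - k))).
Proof.
move=> le_l; rewrite /pet_walk ifF; last lia.
rewrite ifF; last lia.
rewrite ifT; last lia.
by congr (inr (inZp (_ + _ * _))); lia.
Qed.

Lemma pet_walk_end i : pet_walk i (u + vp + vm + 2) = inl (inZp i).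
Proof. by rewrite /pet_walk ifF ?ifF ?ifF //; lia. Qed.

Lemma pet_walk_closed i : pet_walk i (u + vp + vm + 2) = pet_walk i 0.
Proof. by rewrite pet_walk_end pet_walk_rim // addn0. Qed.

Lemma inZp_closing i : inZp (i + u + vp * k + vm * (n - k)) = inZp i :> 'I_n.
Proof. by apply: inZp_mod; rewrite -!addnA -modnDmr !addnA walk_closes addn0. Qed.

Lemma pet_walk_adj i j :
  j < u + vp + vm + 2 -> pet_adj n k (pet_walk i j) (pet_walk i j.+1).
Proof.
move=> lt_j.
case: (ltnP j u) => [lt_ju | le_uj].
  by rewrite (pet_walk_rim _ (ltnW lt_ju)) (pet_walk_rim _ lt_ju) /= modnSml addnS eqxx.
case: (leqP j u) => [le_ju | lt_uj].
  have -> : j = u by lia.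
  have -> : u.+1 = u + 1 + 0 by lia.
  by rewrite pet_walk_rim // pet_walk_plus //= mul0n addn0.
case: (ltnP j (u + 1 + vp)) => [lt_j_vp | le_vp_j].
  have -> : j = u + 1 + (j - u - 1) by lia.
  rewrite -addnS !pet_walk_plus; try lia.
  by rewrite /= modnDml mulSnr addnA eqxx.
case: (ltnP j (u + 1 + vp + vm)) => [lt_j_vm | le_vm_j].
  have -> : j = u + 1 + vp + (j - u - 1 - vp) by lia.
  rewrite -addnS !pet_walk_minus; try lia.
  rewrite /= mulSnr addnA; apply/orP; right.
  by rewrite modnDml -[_ + (n - k) + k]addnA subnK // modnDr.
have -> : j = u + 1 + vp + vm by lia.
rewrite pet_walk_minus // (_ : (u + 1 + vp + vm).+1 = u + vp + vm + 2); last lia.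
by rewrite pet_walk_end inZp_closing /=.
Qed.

Variables (m : nat) (f : pet_vertex n -> 'I_m).
Hypotheses (f_hom : pet_hom_to_cycle n k m f) (m_odd : odd m)
  (u_gt0 : 0 < u) (walk_len : u + vp + vm + 2 = m).

Definition spoke_fwd i := cycle_fwd (f (inl (inZp i))) (f (inr (inZp i))).
Definition rim_fwd i := cycle_fwd (f (inl (inZp i))) (f (inl (inZp i.+1))).

Lemma pet_walk_fwd i j :
  j < m -> cycle_fwd (f (pet_walk i j)) (f (pet_walk i j.+1)) = rim_fwd i.
Proof.
move=> lt_jm; rewrite (odd_cycle_closed_walk_fwd (W := f \o pet_walk i)) //=.
- by rewrite !pet_walk_rim // addn0 addn1.
- by move=> l lt_lm; apply/f_hom/pet_walk_adj; rewrite walk_len.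
- by rewrite -[X in pet_walk _ X]walk_len pet_walk_closed.
Qed.

Lemma spoke_fwd_shift i : spoke_fwd (i + u) = rim_fwd i.
Proof.
rewrite -(pet_walk_fwd i (j := u)); last lia.
have -> : u.+1 = u + 1 + 0 by lia.
by rewrite pet_walk_rim // pet_walk_plus // mul0n addn0.
Qed.

Lemma spoke_fwd_return i : ~~ spoke_fwd i = rim_fwd i.
Proof.
rewrite -(pet_walk_fwd i (j := u + 1 + vp + vm)); last lia.
have -> : (u + 1 + vp + vm).+1 = u + vp + vm + 2 by lia.
rewrite (pet_walk_minus i (leqnn vm)) pet_walk_end inZp_closing cycle_fwdC //; first lia.
by apply: f_hom => /=.
Qed.

Lemma rim_fwd_succ i : 1 < u -> rim_fwd i.+1 = rim_fwd i.
Proof.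
move=> u_gt1; rewrite -(pet_walk_fwd i (j := 1)); last lia.
by rewrite !pet_walk_rim // addn1 addn2.
Qed.

Lemma spoke_fwd_addu i : spoke_fwd (i + u) = ~~ spoke_fwd i.
Proof. by rewrite spoke_fwd_shift spoke_fwd_return. Qed.

Lemma rim_length_eq1 : u = 1.
Proof.
apply/eqP; rewrite eqn_leq u_gt0 andbT leqNgt; apply/negP => u_gt1.
have spoke_const j : spoke_fwd j = spoke_fwd 0.
  elim: j => // j IH.
  by rewrite -IH -[spoke_fwd _]negbK spoke_fwd_return rim_fwd_succ // -spoke_fwd_return negbK.
by have := spoke_fwd_addu 0; rewrite !spoke_const; case: (spoke_fwd 0).
Qed.

Lemma pet_order_even : ~~ odd n.
Proof.
have spoke_fwdS j : spoke_fwd j.+1 = ~~ spoke_fwd j.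
  by rewrite -spoke_fwd_addu rim_length_eq1 addn1.
have spoke_alt j : spoke_fwd j = spoke_fwd 0 (+) odd j.
  by elim: j => [|j IH]; rewrite ?addbF // spoke_fwdS IH /= addbN.
have spoke_n : spoke_fwd n = spoke_fwd 0.
  by rewrite /spoke_fwd (@inZp_mod n' n 0) // modnn mod0n.
by move: (spoke_alt n); rewrite spoke_n; case: (odd n); case: (spoke_fwd 0).
Qed.

End PetersenWalk.

Theorem mainTheorem18 (n k r : nat) :
  2 < 2 * k -> 2 * k <= n ->
  (exists u vp vm, ip_solution n k u vp vm /\ u + vp + vm = 2 * r + 1) ->
  (forall u vp vm, ip_solution n k u vp vm -> ~ ip_trivial u vp vm) ->
  ~ (exists f : pet_vertex n -> 'I_(2 * r + 3), pet_hom_to_cycle n k (2 * r + 3) f).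
Proof.
move=> k_gt1 le_2k_n [u [vp [vm [sol sol_val]]]] nontrivial [f f_hom].
have u_gt0 : 0 < u.
  by rewrite lt0n; apply/eqP => u0; apply: (nontrivial u vp vm sol); left.
case: sol => [[[t eq_t] _] _].
clear nontrivial; case: n => [|n'] in le_2k_n f f_hom eq_t *; first lia.
have k_le_n : k <= n'.+1 by lia.
have closes := ip_closing k_le_n eq_t.
have m_odd : odd (2 * r + 3) by rewrite oddD oddM.
have walk_len : u + vp + vm + 2 = 2 * r + 3 by lia.
have u_eq1 := rim_length_eq1 k_le_n closes f_hom m_odd u_gt0 walk_len.
have n_even := pet_order_even k_le_n closes f_hom m_odd u_gt0 walk_len.
apply/eqP: eq_t; apply: ip_equation_parity n_even; first by rewrite u_eq1.
by rewrite sol_val oddD oddM.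
Qed.
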